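(* Let $\mathcal{X}=\{X\in\mathbb{R}^{n\times m}: X\ge0 \text{ entrywise},\ X^\top\mathbb{1}_n=\mathbb{1}_m\}$ (column-stochastic matrices) and consider the lift $\varphi\colon(\mathrm{S}^{n-1})^m\to\mathcal{X}$, $\varphi(y_1,\dots,y_m)=[y_1\odot y_1,\dots,y_m\odot y_m]$. It satisfies ''local $\Rightarrow$ local'' at every point, satisfies ''1 $\Rightarrow$ 1'' at $(y_1,\dots,y_m)$ if and only if $(y_i)_j\neq0$ for all $i,j$, and satisfies ''2 $\Rightarrow$ 1'' at every point.
   Context: $\mathbb{1}_n$ is the all-ones vector, $\odot$ the entrywise product, $[x_1,\dots,x_m]$ the $n\times m$ matrix with columns $x_i$, $\mathrm{S}^{n-1}$ the unit sphere. General setting: for a smooth manifold $\mathcal{M}$ and smooth $\varphi\colon\mathcal{M}\to\mathcal{E}$ with image $\mathcal{X}$, and a cost $f$, set $g=f\circ\varphi$. Tangent cone: $\mathrm{T}_x\mathcal{X}=\{\lim (x_i-x)/\tau_i: x_i\in\mathcal{X},\tau_i>0,\tau_i\to0\}$; $K^*=\{u:\langle u,v\rangle\ge0\ \forall v\in K\}$; $x$ is stationary for $f$ on $\mathcal{X}$ if $\nabla f(x)\in(\mathrm{T}_x\mathcal{X})^*$. $y$ is 1-critical for $g$ if $(g\circ c)'(0)=0$ for all smooth curves $c$ in $\mathcal{M}$ with $c(0)=y$; 2-critical if moreover $(g\circ c)''(0)\ge0$ for all such curves. ''local $\Rightarrow$ local'' at $y$: for every continuous $f\colon\mathcal{X}\to\mathbb{R}$,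 if $y$ is a local minimum of $g$ then $\varphi(y)$ is a local minimum of $f$ on $\mathcal{X}$. ''$k\Rightarrow1$'' at $y$ ($k=1,2$): for every $k$-times differentiable $f\colon\mathcal{E}\to\mathbb{R}$, if $y$ is $k$-critical for $g$ then $\varphi(y)$ is stationary for $f$ on $\mathcal{X}$. *)

From HB Require Import structures.
From mathcomp Require Import all_boot all_order all_algebra.
From mathcomp Require Import all_classical all_reals all_analysis.
Set Implicit Arguments. Unset Strict Implicit. Unset Printing Implicit Defensive.
Import Order.TTheory GRing.Theory Num.Theory.
Import numFieldNormedType.Exports.
Local Open Scope classical_set_scope.
Local Open Scope ring_scope.

Section Defs.
Variables (R : realType) (n m : nat).
Local Notation E := 'M[R]_(n, m).

Definition frob (A B : E) : R := \sum_(i < n) \sum_(j < m) A i j * B i j.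

Definition stoch : set E :=
  [set X : E | (forall i j, 0 <= X i j) /\ X^T *m (const_mx 1 : 'cV[R]_n) = const_mx 1].

(* the manifold (S^{n-1})^m, realized as matrices whose columns are unit vectors *)
Definition sphm : set E :=
  [set Y : E | forall j : 'I_m, \sum_(i < n) Y i j ^+ 2 = 1].

Definition lift (Y : E) : E := \matrix_(i, j) (Y i j * Y i j).

Definition tcone (A : set E) (x : E) : set E :=
  [set v : E | exists (xs : nat -> E) (ts : nat -> R),
     (forall k, A (xs k)) /\ (forall k, 0 < ts k) /\
     ts @ \oo --> (0 : R) /\
     (fun k => (ts k)^-1 *: (xs k - x)) @ \oo --> v].

Definition dualcone (K : set E) : set E :=
  [set u : E | forall v : E, K v -> 0 <= frob u v].

(* gradient of f at x w.r.t. the Frobenius inner product (Riesz representer of Df(x)) *)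
Definition grad (f : E -> R^o) (x : E) : E :=
  \matrix_(i, j) ('d f x (delta_mx i j : E)).

Definition stationary (f : E -> R^o) (A : set E) (x : E) : Prop :=
  dualcone (tcone A x) (grad f x).

Definition smooth1 (h : R -> R^o) : Prop :=
  forall (k : nat) (t : R), derivable (derive1n k h) t 1.

Definition smooth_curve (c : R -> E) : Prop :=
  (forall i j, smooth1 (fun t => c t i j)) /\ (forall t, sphm (c t)).

Definition diff1 (f : E -> R^o) : Prop := forall x, differentiable f x.
Definition diff2 (f : E -> R^o) : Prop :=
  diff1 f /\ forall (v : E) (x : E), differentiable (fun z : E => ('d f z v : R^o)) x.

Definition crit1 (g : E -> R^o) (y : E) : Prop :=
  forall c : R -> E, smooth_curve c -> c 0 = y -> derive1 (g \o c) 0 = 0.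
Definition crit2 (g : E -> R^o) (y : E) : Prop :=
  crit1 g y /\
  forall c : R -> E, smooth_curve c -> c 0 = y -> 0 <= derive1 (derive1 (g \o c)) 0.

Definition locmin_on (A : set E) (f : E -> R) (x : E) : Prop :=
  \forall z \near x, A z -> f x <= f z.

Definition local_local (y : E) : Prop :=
  forall f : E -> R, {within stoch, continuous f} ->
    locmin_on sphm (f \o lift) y -> locmin_on stoch f (lift y).
Definition one_one (y : E) : Prop :=
  forall f : E -> R^o, diff1 f -> crit1 (f \o lift) y -> stationary f stoch (lift y).
Definition two_one (y : E) : Prop :=
  forall f : E -> R^o, diff2 f -> crit2 (f \o lift) y -> stationary f stoch (lift y).

End Defs.

From Pilot Require Import Defs.
From HB Require Import structures.
From mathcomp Require Import all_boot all_order all_algebra.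
From mathcomp Require Import all_classical all_reals all_analysis.
From mathcomp Require Import ring lra.
Import Order.TTheory GRing.Theory Num.Theory.
Import numFieldNormedType.Exports.
Local Open Scope classical_set_scope.
Local Open Scope ring_scope.

Set Implicit Arguments. Unset Strict Implicit.

(* The tangent cone of the column-stochastic matrices at X consists of the V whose
   columns sum to zero and which are nonnegative wherever X vanishes, so f is
   stationary at X exactly when, in every column, its gradient is constant on the
   support of X and not smaller off it.
   Rotating column j of y in the coordinate plane (a, b) is a curve on the sphere
   whose lift runs along the line through lift y in the direction E_aj - E_bj, at
   parameter h(t) = (y_aj cos t - y_bj sin t)^2 - y_aj^2. Since h'(0) = -2 y_aj y_bj,
   1-criticality gives the equalities on the support; when y_aj = 0 we have h'(0) = 0
   and h''(0) = 2 y_bj^2, so 2-criticality gives the inequalities. If some y_ij = 0,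
   the linear cost -X_ij pulls back to -y_ij^2, which is 1-critical at y, yet it
   decreases from lift y along E_ij - E_kj. Finally, the entrywise square root of a
   stochastic matrix near lift y, taken with the signs of y, is a point of the sphere
   near y, which gives "local => local". *)

Section TrigPoly.
Variable R : realType.

Definition trig (a b c t : R) : R := a + b * cos t + c * sin t.

Global Instance is_derive_trig (a b c t : R) :
  is_derive t (1 : R) (trig a b c) (c * cos t - b * sin t).
Proof.
have -> : trig a b c = cst a + b *: (@cos R) + c *: (@sin R) by apply: funext.
apply: (is_derive_eq (is_deriveD (is_deriveD (is_derive_cst a t 1)
  (is_deriveZ b (is_derive_cos t))) (is_deriveZ c (is_derive_sin t)))).
by rewrite add0r addrC scalerN.
Qed.

Lemma derive1_trig (a b c : R) : derive1 (trig a b c) = trig 0 c (- b).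
Proof. by apply: funext => t; rewrite derive1E derive_val /trig; ring. Qed.

Lemma derive1n_trig (a b c : R) k :
  exists a' b' c', derive1n k (trig a b c) = trig a' b' c'.
Proof.
elim: k => [|k [a' [b' [c' IH]]]]; first by exists a, b, c.
by exists 0, c', (- b'); rewrite derive1nS IH derive1_trig.
Qed.

Lemma smooth1_trig (a b c : R) : smooth1 (trig a b c).
Proof.
move=> k t; have [a' [b' [c' ->]]] := derive1n_trig a b c k.
exact: ex_derive.
Qed.

End TrigPoly.

Section RealCalculus.
Variable R : realType.

Lemma derive2_comp_crit (F h : R -> R) (t : R) :
  (forall s, derivable F s 1) -> derivable (derive1 F) (h t) 1 ->
  (forall s, derivable h s 1) -> derivable (derive1 h) t 1 -> derive1 h t = 0 ->
  derive1 (derive1 (F \o h)) t = derive1 F (h t) * derive1 (derive1 h) t.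
Proof.
move=> dF dF' dh dh' h't.
have -> : derive1 (F \o h) = (derive1 F \o h) * derive1 h.
  by apply: funext => s; rewrite (derive1_comp (dh s) (dF (h s))).
have dF'h : derivable (derive1 F \o h) t 1.
  apply/derivable1_diffP; apply: differentiable_comp; apply/derivable1_diffP.
    exact: dh.
  exact: dF'.
by rewrite derive1E (deriveM dF'h dh') h't scale0r addr0 -derive1E.
Qed.

Lemma is_derive_line (V : normedModType R) (f : V -> R^o) (X D : V) (s : R) :
  differentiable f (s *: D + X) ->
  is_derive s 1 (fun t : R => f (t *: D + X)) ('d f (s *: D + X) D).
Proof.
move=> df; set g := fun t : R => f (t *: D + X).
have slopeE : (fun h : R => h^-1 *: ((g \o shift s) (h *: (1 : R)) - g s)) =
    fun h : R => h^-1 *: ((f \o shift (s *: D + X)) (h *: D) - f (s *: D + X)).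
  apply: funext => h /=; congr (_ *: (f _ - _)).
  by rewrite scalerDl addrA; congr (_ *: _ + _ + _); exact: mulr1.
apply: DeriveDef; first by rewrite /derivable slopeE; exact: diff_derivable.
by rewrite /derive slopeE -/(derive f _ D) deriveE.
Qed.

End RealCalculus.

Section StochasticMatrices.
Variables (R : realType) (n m : nat).
Local Notation E := 'M[R]_(n, m).
Local Notation stoch := (@stoch R n m).
Local Notation lift := (@Defs.lift R n m).

Lemma stochE (X : E) :
  stoch X <-> (forall i j, 0 <= X i j) /\ (forall j, \sum_i X i j = 1).
Proof.
split; case=> X_ge0 colsum; split => //.
  move=> j; have /matrixP/(_ j ord0) := colsum; rewrite !mxE => <-.
  by apply: eq_bigr => i _; rewrite !mxE mulr1.
apply/matrixP => j k; rewrite !mxE -[RHS](colsum j).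
by apply: eq_bigr => i _; rewrite !mxE mulr1.
Qed.

Lemma stoch_col_neq0 (X : E) j : stoch X -> exists i, X i j != 0.
Proof.
move=> /stochE [_ /(_ j) colsum]; apply/existsP; apply: contraT.
rewrite negb_exists => /forallP X0; move: colsum.
rewrite big1 => [/eqP|i _]; first by rewrite eq_sym oner_eq0.
by have := X0 i; rewrite negbK => /eqP.
Qed.

Lemma lift_stoch (y : E) : sphm y -> stoch (lift y).
Proof.
move=> y_sph; apply/stochE; split=> [i j|j]; first by rewrite mxE -expr2 sqr_ge0.
by rewrite -(y_sph j); apply: eq_bigr => i _; rewrite !mxE expr2.
Qed.

Lemma lift_eq0 (y : E) i j : (lift y i j == 0) = (y i j == 0).
Proof. by rewrite mxE mulf_eq0 orbb. Qed.

Definition transfer_mx (j : 'I_m) (a b : 'I_n) : E := delta_mx a j - delta_mx b j.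

Lemma colsum_transfer (X : E) j a b s k :
  \sum_i (s *: transfer_mx j a b + X) i k = \sum_i X i k.
Proof.
have colsum_delta c : \sum_(i < n) ((i == c) && (k == j))%:R = (k == j)%:R :> R.
  rewrite (bigD1 c) //= big1 => [|i /negbTE ->] //.
  by rewrite eqxx addr0.
rewrite (eq_bigr (fun i => s * (((i == a) && (k == j))%:R - ((i == b) && (k == j))%:R)
  + X i k)) => [|i _]; last by rewrite !mxE.
by rewrite big_split /= -mulr_sumr sumrB !colsum_delta subrr mulr0 add0r.
Qed.

Lemma stoch_transfer (X : E) j a b s : stoch X -> a != b -> 0 <= s <= X b j ->
  stoch (s *: transfer_mx j a b + X).
Proof.
move=> /stochE [X_ge0 colsum] ab /andP [s_ge0 s_le]; apply/stochE; split.
  move=> i k; rewrite !mxE.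
  have [[-> ->]|ik] := eqVneq (i, k) (b, j).
    by rewrite !eqxx [b == a]eq_sym (negbTE ab) /= sub0r mulrN1 addrC subr_ge0.
  have ikb : (i == b) && (k == j) = false.
    by apply: contraNF ik => /andP [/eqP -> /eqP ->].
  by rewrite ikb subr0 addr_ge0 // mulr_ge0.
by move=> k; rewrite colsum_transfer colsum.
Qed.

Lemma frob_grad (f : E -> R^o) x V : frob (grad f x) V = 'd f x V.
Proof.
rewrite {2}(matrix_sum_delta V) linear_sum; apply: eq_bigr => i _.
by rewrite linear_sum; apply: eq_bigr => j _; rewrite linearZ /= mxE mulrC.
Qed.

Lemma diff_transfer_mx (f : E -> R^o) x j a b :
  'd f x (transfer_mx j a b) = grad f x a j - grad f x b j.
Proof. by rewrite linearB !mxE. Qed.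

Lemma tcone_stoch_ge0 (X V : E) i j : tcone stoch X V -> X i j = 0 -> 0 <= V i j.
Proof.
move=> [xs [ts [xs_stoch [ts_gt0 [_ xs_cvg]]]]] Xij0.
have Vij : (fun k => ((ts k)^-1 *: (xs k - X)) i j) @ \oo --> V i j.
  exact: (continuous_cvg _ (@coord_continuous R n m i j V) xs_cvg).
apply: (closed_cvg (fun x : R => 0 <= x) (@closed_ge _ 0) _ _ Vij).
apply: nearW => k /=.
have /stochE [xs_ge0 _] := xs_stoch k.
by rewrite !mxE Xij0 subr0 mulr_ge0 // invr_ge0 ltW.
Qed.

Lemma tcone_stoch_colsum (X V : E) j : stoch X -> tcone stoch X V -> \sum_i V i j = 0.
Proof.
move=> /stochE [_ colsum] [xs [ts [xs_stoch [_ [_ xs_cvg]]]]].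
have colsum_cvg : (fun k => \sum_i ((ts k)^-1 *: (xs k - X)) i j) @ \oo --> \sum_i V i j.
  apply: cvg_big; first exact: add_continuous.
  by move=> i _; exact: (continuous_cvg _ (@coord_continuous R n m i j V) xs_cvg).
suff colsum0 : (fun k => \sum_i ((ts k)^-1 *: (xs k - X)) i j) = fun=> 0.
  by rewrite colsum0 in colsum_cvg; exact: (cvg_unique _ colsum_cvg (cvg_cst 0)).
apply: funext => k; have /stochE [_ xs_colsum] := xs_stoch k.
under eq_bigr do rewrite !mxE.
by rewrite -mulr_sumr sumrB xs_colsum colsum subrr mulr0.
Qed.

Lemma tcone_stoch_transfer (X : E) j a b : stoch X -> X b j != 0 -> a != b ->
  tcone stoch X (transfer_mx j a b).
Proof.
move=> X_stoch Xbj ab; have /stochE [X_ge0 _] := X_stoch.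
pose ts k := X b j * harmonic k.
have ts_gt0 k : 0 < ts k by rewrite mulr_gt0 ?harmonic_gt0 // lt_def Xbj X_ge0.
exists (fun k => ts k *: transfer_mx j a b + X), ts; split; [|split; [by []|split]].
- move=> k; apply: stoch_transfer => //; rewrite ltW //=.
  by rewrite ler_piMr // /harmonic /= invf_le1 ?ler1n.
- by rewrite -(mulr0 (X b j)); apply: cvgMl_tmp; exact: cvg_harmonic.
- suff -> : (fun k => (ts k)^-1 *: (ts k *: transfer_mx j a b + X - X)) =
      fun=> transfer_mx j a b by exact: cvg_cst.
  by apply: funext => k; rewrite addrK scalerA mulVf ?scale1r ?lt0r_neq0.
Qed.

Lemma dualcone_tcone_stoch (X G : E) : stoch X ->
  (forall j a b, X a j != 0 -> X b j != 0 -> G a j = G b j) ->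
  (forall j a b, X a j = 0 -> X b j != 0 -> G b j <= G a j) ->
  dualcone (tcone stoch X) G.
Proof.
move=> X_stoch G_eq G_le V V_tcone; rewrite /frob exchange_big /=.
apply: sumr_ge0 => j _; have [b Xbj] := stoch_col_neq0 j X_stoch.
have -> : \sum_i G i j * V i j = \sum_i (G i j - G b j) * V i j + G b j * \sum_i V i j.
  by rewrite mulr_sumr -big_split /=; apply: eq_bigr => i _; ring.
rewrite (tcone_stoch_colsum j X_stoch V_tcone) mulr0 addr0; apply: sumr_ge0 => i _.
have [Xij0|Xij] := eqVneq (X i j) 0; last by rewrite (G_eq j i b Xij Xbj) subrr mul0r.
by rewrite mulr_ge0 ?subr_ge0 ?(G_le j i b Xij0 Xbj) ?(tcone_stoch_ge0 V_tcone Xij0).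
Qed.

End StochasticMatrices.

Arguments transfer_mx {R n m} j a b.

Section PlaneRotation.
Variables (R : realType) (n m : nat).
Local Notation E := 'M[R]_(n, m).
Local Notation lift := (@Defs.lift R n m).
Variables (y : E) (j : 'I_m) (a b : 'I_n).
Local Notation ya := (y a j).
Local Notation yb := (y b j).

Definition plane_rot (t : R) : E := \matrix_(i, k)
  if k == j then
    if i == a then trig 0 ya (- yb) t else if i == b then trig 0 yb ya t else y i k
  else y i k.

Definition rot_mass (t : R) : R := trig 0 ya (- yb) t ^+ 2 - ya ^+ 2.

Lemma plane_rot0 : plane_rot 0 = y.
Proof.
apply/matrixP => i k; rewrite !mxE /trig cos0 sin0.
case: eqVneq => [->|_] //; case: eqVneq => [->|_]; first by ring.
by case: eqVneq => [->|_] //; ring.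
Qed.

Lemma plane_rot_entry i k : exists a' b' c', (fun t => plane_rot t i k) = trig a' b' c'.
Proof.
suff [a' [b' [c' rotE]]] : exists a' b' c', forall t, plane_rot t i k = trig a' b' c' t.
  by exists a', b', c'; apply: funext.
have const_trig (c t : R) : c = trig c 0 0 t by rewrite /trig; ring.
case: (eqVneq k j) => [->|kj]; last first.
  by exists (y i k), 0, 0 => t; rewrite mxE (negbTE kj) -const_trig.
case: (eqVneq i a) => [->|ia]; first by exists 0, ya, (- yb) => t; rewrite mxE !eqxx.
case: (eqVneq i b) => [ib|ib].
  by exists 0, yb, ya => t; rewrite mxE eqxx (negbTE ia) ib eqxx.
by exists (y i j), 0, 0 => t; rewrite mxE eqxx (negbTE ia) (negbTE ib) -const_trig.
Qed.

Local Notation u := (trig 0 ya (- yb)).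
Local Notation u' := (trig 0 (- yb) (- ya)).

Lemma rot_mass0 : rot_mass 0 = 0.
Proof. by rewrite /rot_mass /trig cos0 sin0; ring. Qed.

Lemma is_derive_rot_mass t : is_derive t (1 : R) rot_mass (2 * (u t * u' t)).
Proof.
have -> : rot_mass = u * u - cst (ya ^+ 2) by apply: funext => s; rewrite /rot_mass expr2.
have uu := is_deriveM (is_derive_trig 0 ya (- yb) t) (is_derive_trig 0 ya (- yb) t).
apply: (is_derive_eq (is_deriveB uu (is_derive_cst _ t 1))).
by rewrite /trig -[_ *: _]/(_ * _); ring.
Qed.

Lemma derive1_rot_mass : derive1 rot_mass = fun t => 2 * (u t * u' t).
Proof. by apply: funext => t; rewrite derive1E; have [_ ->] := is_derive_rot_mass t. Qed.

Lemma is_derive_derive1_rot_mass t :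
  is_derive t (1 : R) (derive1 rot_mass) (2 * (u' t ^+ 2 + u t * trig 0 (- ya) yb t)).
Proof.
have -> : derive1 rot_mass = 2 *: (u * u') by rewrite derive1_rot_mass.
have uu' := is_deriveM (is_derive_trig 0 ya (- yb) t) (is_derive_trig 0 (- yb) (- ya) t).
apply: (is_derive_eq (is_deriveZ 2 uu')).
by rewrite /trig -![_ *: _]/(_ * _); ring.
Qed.

Lemma derive1_rot_mass0 : derive1 rot_mass 0 = - 2 * (ya * yb).
Proof. by rewrite derive1_rot_mass /trig cos0 sin0; ring. Qed.

Lemma derive2_rot_mass0 : derive1 (derive1 rot_mass) 0 = 2 * (yb ^+ 2 - ya ^+ 2).
Proof.
rewrite derive1E; have [_ ->] := is_derive_derive1_rot_mass 0.
by rewrite /trig cos0 sin0; ring.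
Qed.

Hypothesis ab : a != b.

Lemma lift_plane_rot t : lift (plane_rot t) = rot_mass t *: transfer_mx j a b + lift y.
Proof.
apply/matrixP => i k; rewrite !mxE.
case: (eqVneq k j) => [->|kj]; last by rewrite !andbF subrr mulr0 add0r.
rewrite !andbT; case: (eqVneq i a) => [->|ia].
  by rewrite (negbTE ab) /rot_mass /=; ring.
case: (eqVneq i b) => [->|ib] /=; last by rewrite subrr mulr0 add0r.
have pythagoras := cos2Dsin2 t.
rewrite /rot_mass /trig; nra.
Qed.

Lemma sphm_plane_rot t : sphm y -> sphm (plane_rot t).
Proof.
move=> y_sph k; rewrite -(y_sph k).
have sqr_lift (Y : E) i : Y i k ^+ 2 = lift Y i k by rewrite mxE expr2.
under eq_bigr do rewrite sqr_lift lift_plane_rot.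
under [RHS]eq_bigr do rewrite sqr_lift.
exact: colsum_transfer.
Qed.

Lemma smooth_curve_plane_rot : sphm y -> smooth_curve plane_rot.
Proof.
move=> y_sph; split=> [i k|t]; last exact: sphm_plane_rot.
by have [a' [b' [c' ->]]] := plane_rot_entry i k; exact: smooth1_trig.
Qed.

End PlaneRotation.

Section LiftCriticality.
Variables (R : realType) (n m : nat).
Local Notation E := 'M[R]_(n, m).
Local Notation lift := (@Defs.lift R n m).
Variables (f : E -> R^o) (y : E) (j : 'I_m) (a b : 'I_n).
Hypotheses (y_sph : sphm y) (ab : a != b).
Local Notation D := (transfer_mx j a b).
Local Notation F := (fun s : R => f (s *: D + lift y)).
Local Notation h := (rot_mass y j a b).

Lemma pullback_plane_rot : (f \o lift) \o plane_rot y j a b = F \o h.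
Proof. by apply: funext => t; rewrite /= (lift_plane_rot y j ab). Qed.

Lemma crit1_transfer : diff1 f -> crit1 (f \o lift) y ->
  'd f (lift y) D * (y a j * y b j) = 0.
Proof.
move=> df crit; have [dF0 F'0] := is_derive_line (df (h 0 *: D + lift y)).
have [dh _] := is_derive_rot_mass y j a b 0.
have := crit _ (smooth_curve_plane_rot j ab y_sph) (plane_rot0 y j a b).
rewrite pullback_plane_rot (derive1_comp dh dF0) derive1E F'0 derive1_rot_mass0 rot_mass0.
by rewrite scale0r add0r mulrCA => /eqP; rewrite mulf_eq0 oppr_eq0 pnatr_eq0 => /eqP.
Qed.

Lemma crit2_transfer : diff2 f -> crit2 (f \o lift) y -> y a j = 0 -> y b j != 0 ->
  0 <= 'd f (lift y) D.
Proof.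
move=> [df ddf] [_ crit] yaj0 ybj.
have F_der (s : R) := is_derive_line (df (s *: D + lift y)).
have F'E : derive1 F = fun s => 'd f (s *: D + lift y) D.
  by apply: funext => s; rewrite derive1E; have [_ ->] := F_der s.
have dF s : derivable F s 1 by have [] := F_der s.
have dF' : derivable (derive1 F) (h 0) 1.
  by rewrite F'E; have [] := is_derive_line (ddf D (h 0 *: D + lift y)).
have dh s : derivable h s 1 by have [] := is_derive_rot_mass y j a b s.
have dh' : derivable (derive1 h) 0 1 by have [] := is_derive_derive1_rot_mass y j a b 0.
have h'0 : derive1 h 0 = 0 by rewrite derive1_rot_mass0 yaj0 !mul0r mulr0.
have := crit _ (smooth_curve_plane_rot j ab y_sph) (plane_rot0 y j a b).
rewrite pullback_plane_rot (derive2_comp_crit dF dF' dh dh' h'0) F'E rot_mass0 /=.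
rewrite derive2_rot_mass0 yaj0 expr0n subr0 scale0r add0r.
by rewrite pmulr_lge0 // mulr_gt0 // lt_def sqrf_eq0 ybj sqr_ge0.
Qed.

End LiftCriticality.

Section EntryCost.
Variables (R : realType) (n m : nat) (i : 'I_n) (j : 'I_m).
Local Notation E := 'M[R]_(n, m).
Local Notation lift := (@Defs.lift R n m).

Definition neg_entry (N : E) : R^o := - N i j.

Lemma neg_entry_is_linear : linear neg_entry.
Proof. by move=> c A B; rewrite /neg_entry !mxE opprD -mulrN. Qed.

HB.instance Definition _ :=
  GRing.isLinear.Build R E R^o *:%R neg_entry neg_entry_is_linear.

Lemma continuous_neg_entry : continuous neg_entry.
Proof. by move=> x; apply: continuousN; exact: coord_continuous. Qed.

Lemma crit1_neg_entry (y : E) : y i j = 0 -> crit1 (neg_entry \o lift) y.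
Proof.
move=> yij0 c [c_smooth _] c0; pose h t := c t i j.
have -> : (neg_entry \o lift) \o c = - (h * h).
  by apply: funext => t; rewrite /= /neg_entry mxE.
have dh : derivable h 0 1 by have := c_smooth i j 0%N 0; rewrite derive1n0.
rewrite derive1E (deriveN (derivableM dh dh)) (deriveM dh dh).
by rewrite /h c0 yij0 scale0r addr0 oppr0.
Qed.

Lemma one_one_lift_neq0 (y : E) : sphm y -> one_one y -> y i j != 0.
Proof.
move=> y_sph one_y; apply/eqP => yij0.
have y_stoch := lift_stoch y_sph.
have [k ykj] := stoch_col_neq0 j y_stoch.
have ik : i != k by apply: contraNneq ykj => <-; rewrite lift_eq0 yij0.
have := one_y _ (fun x => linear_differentiable x continuous_neg_entry)
  (crit1_neg_entry yij0) _ (tcone_stoch_transfer y_stoch ykj ik).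
rewrite frob_grad diff_lin; last exact: continuous_neg_entry.
by rewrite /= /neg_entry !mxE !eqxx (negbTE ik) /= subr0 oppr_ge0 ler10.
Qed.

End EntryCost.

Section SignedSqrt.
Variable R : realType.

Definition signed_sqrt (s z : R) : R := if 0 <= s then Num.sqrt z else - Num.sqrt z.

Lemma signed_sqrtM (s z : R) : 0 <= z -> signed_sqrt s z * signed_sqrt s z = z.
Proof.
by move=> z_ge0; rewrite /signed_sqrt; case: ifP => _; rewrite ?mulrNN -expr2 sqr_sqrtr.
Qed.

Lemma normB_lt_of_sqr (b r e : R) : 0 <= b -> 0 <= r -> 0 < e ->
  `|b * b - r * r| < e * e -> `|b - r| < e.
Proof.
move=> b_ge0 r_ge0 e_gt0.
have -> : `|b * b - r * r| = `|b - r| * (b + r).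
  by rewrite -(ger0_norm (addr_ge0 b_ge0 r_ge0)) -normrM; congr `|_|; ring.
have : `|b - r| <= b + r by rewrite (le_trans (ler_normB _ _)) // !ger0_norm.
have := normr_ge0 (b - r); nra.
Qed.

Lemma normB_signed_sqrt_lt (s z e : R) : 0 <= z -> 0 < e ->
  `|s * s - z| < e * e -> `|s - signed_sqrt s z| < e.
Proof.
move=> z_ge0 e_gt0; rewrite -{1}(signed_sqrtM s z_ge0) /signed_sqrt.
case: ifPn => s_ge0 lt_e.
  exact: normB_lt_of_sqr s_ge0 (sqrtr_ge0 z) e_gt0 lt_e.
rewrite mulrNN -[s * s]mulrNN in lt_e; rewrite opprK -normrN opprD.
have Ns_ge0 : 0 <= - s by rewrite oppr_ge0 ltW // ltNge.
exact: normB_lt_of_sqr Ns_ge0 (sqrtr_ge0 z) e_gt0 lt_e.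
Qed.

End SignedSqrt.

Lemma local_local_lift (R : realType) n m (y : 'M[R]_(n, m)) : local_local y.
Proof.
move=> f _ /nbhs_ballP [e e_gt0 y_min]; apply/nbhs_ballP.
exists (e * e); first exact: mulr_gt0.
move=> Z Z_near /stochE [Z_ge0 Z_colsum].
pose W : 'M[R]_(n, m) := \matrix_(i, k) signed_sqrt (y i k) (Z i k).
have lift_W : Defs.lift W = Z by apply/matrixP => i k; rewrite !mxE signed_sqrtM.
have W_sph : sphm W.
  move=> k; rewrite -(Z_colsum k); apply: eq_bigr => i _.
  by rewrite -lift_W [in RHS]mxE expr2.
have W_near : ball y e W.
  split=> // i k; rewrite -ball_normE /= mxE; apply: normB_signed_sqrt_lt => //.
  by have [_ /(_ i k)] := Z_near; rewrite -ball_normE /= mxE.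
by have := y_min W W_near W_sph; rewrite /= lift_W.
Qed.

Section LiftStationarity.
Variables (R : realType) (n m : nat).
Local Notation E := 'M[R]_(n, m).
Local Notation lift := (@Defs.lift R n m).
Variables (f : E -> R^o) (y : E).
Hypothesis y_sph : sphm y.

Lemma crit1_grad_eq j a b : diff1 f -> crit1 (f \o lift) y ->
  y a j != 0 -> y b j != 0 -> grad f (lift y) a j = grad f (lift y) b j.
Proof.
move=> df crit yaj ybj; have [->|ab] := eqVneq a b; first by [].
have := crit1_transfer j y_sph ab df crit; rewrite diff_transfer_mx => /eqP.
by rewrite !mulf_eq0 (negbTE yaj) (negbTE ybj) !orbF subr_eq0 => /eqP.
Qed.

Lemma crit2_grad_le j a b : diff2 f -> crit2 (f \o lift) y ->
  y a j = 0 -> y b j != 0 -> grad f (lift y) b j <= grad f (lift y) a j.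
Proof.
move=> df crit yaj0 ybj.
have ab : a != b by apply: contraNneq ybj => <-; rewrite yaj0.
by have := crit2_transfer y_sph ab df crit yaj0 ybj; rewrite diff_transfer_mx subr_ge0.
Qed.

End LiftStationarity.

Lemma one_one_lift (R : realType) n m (y : 'M[R]_(n, m)) :
  sphm y -> (forall i j, y i j != 0) -> one_one y.
Proof.
move=> y_sph y_neq0 f df crit; apply: dualcone_tcone_stoch (lift_stoch y_sph) _ _.
  by move=> j a b; rewrite !lift_eq0; exact: crit1_grad_eq.
by move=> j a b /eqP; rewrite lift_eq0 (negbTE (y_neq0 a j)).
Qed.

Lemma two_one_lift (R : realType) n m (y : 'M[R]_(n, m)) : sphm y -> two_one y.
Proof.
move=> y_sph f df crit; apply: dualcone_tcone_stoch (lift_stoch y_sph) _ _.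
  have [[df1 _] [crit1 _]] := (df, crit).
  by move=> j a b; rewrite !lift_eq0; exact: crit1_grad_eq.
move=> j a b /eqP; rewrite lift_eq0 => /eqP yaj0; rewrite lift_eq0.
exact: crit2_grad_le.
Qed.

Theorem proposition2p6 (R : realType) (n m : nat) :
  (forall y : 'M[R]_(n, m), sphm y -> local_local y) /\
  (forall y : 'M[R]_(n, m), sphm y -> (one_one y <-> forall i j, y i j != 0)) /\
  (forall y : 'M[R]_(n, m), sphm y -> two_one y).
Proof.
split; first by move=> y _; exact: local_local_lift.
split; last exact: two_one_lift.
move=> y y_sph; split; last exact: one_one_lift.
by move=> one_y i j; exact: one_one_lift_neq0.
Qed.
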